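(* For every $n\ge2$, $$\sum_{T}\ \sum_{\{u,w\}\ni e_T} d(u,w)=\binom n2 c_{n-1}.$$ Here $T$ ranges over all plane trees on $n$ vertices, $e_T$ is the key edge of $T$, and $\{u,w\}$ ranges over unordered pairs of distinct vertices of $T$ whose connecting path contains $e_T$.
   Context: General (plane) trees are rooted trees in which each vertex may have any number of children, linearly ordered. The size of a tree is its number of vertices. The key edge of a plane tree with at least two vertices is the edge between the root and its leftmost (first) child. $d(u,w)$ is the number of edges of the path between $u$ and $w$. $c_{n-1}=\frac1n\binom{2n-2}{n-1}$ is the Catalan number. *)

From mathcomp Require Import all_boot.
From Stdlib Require List.
Set Implicit Arguments. Unset Strict Implicit. Unset Printing Implicit Defensive.

Inductive ptree : Type := Node of seq ptree.

(* Vertices are identified with their addresses: the sequence of child indices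
   (0 = leftmost child) on the path from the root. The root is [::]. *)
Fixpoint verts (t : ptree) : seq (seq nat) :=
  let: Node cs := t in
  [::] :: flatten
    ((fix aux (i : nat) (cs : seq ptree) : seq (seq (seq nat)) :=
        match cs with
        | [::] => [::]
        | c :: cs' => map (cons i) (verts c) :: aux i.+1 cs'
        end) 0 cs).

Definition ptsize (t : ptree) : nat := size (verts t).

(* longest common prefix of two addresses (= address of the lowest common ancestor) *)
Fixpoint lcp (u w : seq nat) : seq nat :=
  match u, w with
  | a :: u', b :: w' => if a == b then a :: lcp u' w' else [::]
  | _, _ => [::]
  end.

(* The path from u to w, as the sequence of vertices visited:
   up from u to the lowest common ancestor, then down to w. *)
Definition tpath (u w : seq nat) : seq (seq nat) :=
  let k := size (lcp u w) in
  [seq take i u | i <- rev (iota k (size u - k).+1)] ++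
  [seq take i w | i <- iota k.+1 (size w - k)].

Definition dist (u w : seq nat) : nat := (size (tpath u w)).-1.

Definition is_key_edge (e : seq nat * seq nat) : bool :=
  (e == ([::], [:: 0])) || (e == ([:: 0], [::])).

Definition path_has_key_edge (u w : seq nat) : bool :=
  let p := tpath u w in has is_key_edge (zip p (behead p)).

(* Vertices are listed (without repetition) by verts t, so an
   unordered pair of distinct vertices corresponds to a pair of indices i < j. *)
Definition key_dist_sum (t : ptree) : nat :=
  let V := verts t in
  \sum_(i < size V) \sum_(j < size V | i < j)
    (if path_has_key_edge (nth [::] V i) (nth [::] V j)
     then dist (nth [::] V i) (nth [::] V j) else 0).

Definition catalan (m : nat) : nat := 'C(m.*2, m) %/ m.+1.

(* Write T = Node (c :: cs) and T' = Node cs.  A pair {u, w} crosses the key edge iff exactly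
   one of u, w lies in the leftmost subtree c, and then d(u, w) = depth u + depth w; so the
   key-edge sum of T is |T'| (D c + |c|) + |c| D T', where D is the total depth.  Splitting off
   the leftmost subtree turns the counts C_n, total depths D_n and key-edge sums T_n over trees
   of size n into convolution recurrences, i.e. the series identities C = X + C^2,
   D = 2 C D + P C and T = 2 D P + P^2 with P = X C'.  Eliminating D gives 2 T = X^2 C'',
   i.e. 2 T_n = n (n - 1) C_n, and C = X + C^2 gives the Catalan recurrence for C_n.  The
   series are handled as polynomials truncated at a degree K, identities holding modulo X^K. *)

From HB Require Import structures.
From mathcomp Require Import all_boot all_algebra zify ring.
Set Implicit Arguments. Unset Strict Implicit. Unset Printing Implicit Defensive.

Definition in_key_subtree (u : seq nat) : bool := if u is 0 :: _ then true else false.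

Definition avoids_key (u v : seq nat) : bool := ~~ is_key_edge (u, v).

Lemma has_key_edge_zip (x : seq nat) s :
  has is_key_edge (zip (x :: s) s) = ~~ path avoids_key x s.
Proof. by elim: s x => [|y s IH] x //=; rewrite IH negb_and negbK. Qed.

Lemma path_avoids_key_nonroot (x : seq nat) s :
  [::] \notin x :: s -> path avoids_key x s.
Proof.
elim: s x => [|y s IH] x //; rewrite !in_cons negb_or => /andP[x0 ys0] /=.
rewrite IH // andbT /avoids_key /is_key_edge !xpair_eqE.
by case: x x0 => // a l _; case: y ys0 => // b m _; rewrite /= andbF.
Qed.

Lemma nil_notin_takes (u : seq nat) s :
  u != [::] -> 0 \notin s -> [::] \notin [seq take i u | i <- s].
Proof.
move=> u_ne0 s_ne0; apply/mapP => -[[|i] i_s]; first by rewrite i_s in s_ne0.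
by case: (u) u_ne0.
Qed.

Definition up (u : seq nat) : seq (seq nat) := [seq take i u | i <- rev (iota 0 (size u))].
Definition down (w : seq nat) : seq (seq nat) := [seq take i w | i <- iota 1 (size w)].

Lemma path_up (u : seq nat) : path avoids_key u (up u) = ~~ in_key_subtree u.
Proof.
case: u => [|a u] //; rewrite /up /= rev_cons map_rcons rcons_path take0.
have -> : last (a :: u) [seq take i (a :: u) | i <- rev (iota 1 (size u))] = [:: a].
  rewrite -{1}(take_size (a :: u)) (last_map (fun i => take i (a :: u))) /=.
  by case: (size u) => [|m]; rewrite /= ?take0 // rev_cons last_rcons /= take0.
rewrite path_avoids_key_nonroot /=; last first.
  by rewrite in_cons nil_notin_takes // mem_rev mem_iota.
by rewrite /avoids_key /is_key_edge !xpair_eqE /=; case: a.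
Qed.

Lemma last_up (u : seq nat) : last u (up u) = [::].
Proof. by case: u => [|a u] //; rewrite /up /= rev_cons map_rcons last_rcons. Qed.

Lemma path_down (w : seq nat) : path avoids_key [::] (down w) = ~~ in_key_subtree w.
Proof.
case: w => [|b w] //=; rewrite take0 path_avoids_key_nonroot /=; last first.
  by rewrite in_cons nil_notin_takes // mem_iota.
by rewrite andbT /avoids_key /is_key_edge !xpair_eqE /=; case: b.
Qed.

Lemma rev_iotaS k n : rev (iota k n.+1) = k + n :: rev (iota k n).
Proof. by rewrite -addn1 iotaD rev_cat. Qed.

Lemma size_lcpl u w : size (lcp u w) <= size u.
Proof. by elim: u w => [|a u IH] [|b w] //=; case: eqP => //= _; rewrite ltnS IH. Qed.

Lemma lcp_nil_key u w : lcp u w = [::] -> ~~ (in_key_subtree u && in_key_subtree w).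
Proof. by case: u => [|[|a] u]; case: w => [|[|b] w] //=; case: eqP. Qed.

Lemma lcp_cons_key u w : lcp u w != [::] -> in_key_subtree u = in_key_subtree w.
Proof. by case: u => [|a u] //; case: w => [|b w] //=; case: (a =P b) => [->|]. Qed.

(* The key edge lies on the path iff exactly one end is in the leftmost subtree; the path
   then passes through the root, so its length is the sum of the depths. *)
Definition key_pair_dist (u w : seq nat) : nat :=
  if in_key_subtree u != in_key_subtree w then size u + size w else 0.

Lemma key_pair_distE u w :
  (if path_has_key_edge u w then dist u w else 0) = key_pair_dist u w.
Proof.
rewrite /path_has_key_edge /dist /tpath /key_pair_dist.
have [l0|l_ne0] := eqVneq (lcp u w) [::].
  have key_or : in_key_subtree u != in_key_subtree w = in_key_subtree u || in_key_subtree w.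
    by move: (lcp_nil_key l0); case: (in_key_subtree u); case: (in_key_subtree w).
  rewrite l0 rev_iotaS /= !subn0 add0n take_size -/(up u) -/(down w).
  rewrite has_key_edge_zip cat_path last_up path_up path_down negb_and !negbK key_or.
  by case: ifP => // _; rewrite size_cat !size_map size_rev !size_iota.
have u_ne0 : u != [::] by case: (u) l_ne0.
have w_ne0 : w != [::] by case: (u) l_ne0; case: (w).
rewrite (lcp_cons_key l_ne0) eqxx.
set k := size (lcp u w).
have k_gt0 : 0 < k by rewrite lt0n size_eq0.
rewrite rev_iotaS subnKC ?size_lcpl //= take_size has_key_edge_zip.
rewrite path_avoids_key_nonroot ?if_same // in_cons mem_cat !negb_or eq_sym u_ne0.
by rewrite !nil_notin_takes // ?mem_rev mem_iota ?negb_and -?ltnNge ?k_gt0 ?orbT.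
Qed.

Definition shift_child (u : seq nat) : seq nat := if u is i :: x then i.+1 :: x else [::].

Fixpoint child_verts (i : nat) (cs : seq ptree) : seq (seq (seq nat)) :=
  if cs is c :: cs' then map (cons i) (verts c) :: child_verts i.+1 cs' else [::].

Lemma verts_Node cs : verts (Node cs) = [::] :: flatten (child_verts 0 cs).
Proof. by []. Qed.

Lemma child_vertsS i cs : child_verts i.+1 cs = map (map shift_child) (child_verts i cs).
Proof. by elim: cs i => [|c cs IH] i //=; rewrite IH -map_comp. Qed.

Lemma verts_cons c cs :
  verts (Node (c :: cs)) =
  [::] :: map (cons 0) (verts c) ++ map shift_child (behead (verts (Node cs))).
Proof. by rewrite !verts_Node /= child_vertsS map_flatten. Qed.

Lemma ptsize_gt0 t : 0 < ptsize t.
Proof. by case: t. Qed.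

Lemma ptsize_cons c cs : ptsize (Node (c :: cs)) = ptsize c + ptsize (Node cs).
Proof. by rewrite /ptsize verts_cons verts_Node /= size_cat !size_map addnS. Qed.

Definition depth_sum (t : ptree) : nat := \sum_(x <- verts t) size x.

Lemma sum_nat_const_seq (T : Type) (s : seq T) (c : nat) : \sum_(x <- s) c = size s * c.
Proof. by rewrite big_const_seq count_predT iter_addn_0 mulnC. Qed.

Lemma depth_sum_key_subtree c :
  \sum_(x <- map (cons 0) (verts c)) size x = depth_sum c + ptsize c.
Proof.
rewrite big_map; under eq_bigr => x _ do rewrite /= -addn1.
by rewrite big_split sum_nat_const_seq muln1.
Qed.

Lemma depth_sum_shift cs :
  \sum_(x <- [::] :: map shift_child (behead (verts (Node cs)))) size x =
  depth_sum (Node cs).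
Proof.
by rewrite /depth_sum verts_Node !big_cons big_map; congr (_ + _); apply: eq_bigr => -[].
Qed.

Lemma depth_sum_cons c cs :
  depth_sum (Node (c :: cs)) = depth_sum c + ptsize c + depth_sum (Node cs).
Proof.
rewrite -depth_sum_key_subtree -(depth_sum_shift cs) {1}/depth_sum verts_cons.
by rewrite !big_cons big_cat.
Qed.

Lemma depth_sum_leaf : depth_sum (Node [::]) = 0.
Proof. by rewrite /depth_sum big_seq1. Qed.

Lemma sum_ltn_pairs (T : Type) (x0 : T) (V : seq T) (g : T -> T -> nat) :
  (forall x y, g x y = g y x) -> (forall x, g x x = 0) ->
  2 * (\sum_(i < size V) \sum_(j < size V | i < j) g (nth x0 V i) (nth x0 V j)) =
  \sum_(u <- V) \sum_(w <- V) g u w.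
Proof.
move=> gC g0; rewrite (big_nth x0) big_mkord.
under [RHS]eq_bigr do rewrite (big_nth x0) big_mkord.
have split_ij (i j : 'I_(size V)) : g (nth x0 V i) (nth x0 V j) =
   (if i < j then g (nth x0 V i) (nth x0 V j) else 0) +
   (if j < i then g (nth x0 V j) (nth x0 V i) else 0).
  by case: ltngtP => [_|_|/val_inj ->]; rewrite ?addn0 ?add0n 1?gC ?g0.
under [RHS]eq_bigr do under eq_bigr do rewrite split_ij.
under [RHS]eq_bigr do rewrite big_split /=.
rewrite big_split /= [X in _ + X]exchange_big /= mul2n -addnn.
by congr (_ + _); apply: eq_bigr => i _; rewrite big_mkcond.
Qed.

Lemma key_dist_sum_sym t :
  2 * key_dist_sum t = \sum_(u <- verts t) \sum_(w <- verts t) key_pair_dist u w.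
Proof.
rewrite -(sum_ltn_pairs [::]) => [|x y|x]; last 2 first.
- by rewrite /key_pair_dist eq_sym addnC.
- by rewrite /key_pair_dist eqxx.
by congr (2 * _); apply: eq_bigr => i _; apply: eq_bigr => j _; rewrite key_pair_distE.
Qed.

Lemma sum_key_pair_dist (A B : seq (seq nat)) :
  all in_key_subtree A -> all (predC in_key_subtree) B ->
  \sum_(u <- A ++ B) \sum_(w <- A ++ B) key_pair_dist u w =
  2 * (size B * \sum_(u <- A) size u + size A * \sum_(w <- B) size w).
Proof.
move=> /allP keyA /allP keyB.
have pair_AB u w : u \in A -> w \in B -> key_pair_dist u w = size u + size w.
  by move=> /keyA uA /keyB /negbTE wB; rewrite /key_pair_dist uA wB.
have pair_BA u w : u \in A -> w \in B -> key_pair_dist w u = size u + size w.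
  by move=> /keyA uA /keyB /negbTE wB; rewrite /key_pair_dist uA wB addnC.
have sum_AB : \sum_(u <- A) \sum_(w <- B) (size u + size w) =
    size B * \sum_(u <- A) size u + size A * \sum_(w <- B) size w.
  under eq_bigr do rewrite big_split /= sum_nat_const_seq.
  by rewrite big_split /= big_distrr /= sum_nat_const_seq mulnC.
rewrite big_cat /= !(eq_bigr _ (fun u _ => big_cat _ _ _ _ _)) /= !big_split /=.
rewrite big1_seq => [|u /keyA uA]; last first.
  by rewrite big1_seq // => w /keyA wA; rewrite /key_pair_dist uA wA.
rewrite [X in _ + (_ + X)]big1_seq => [|u /keyB uB]; last first.
  by rewrite big1_seq // => w /keyB wB; rewrite /key_pair_dist (negbTE uB) (negbTE wB).
rewrite [X in _ + (X + _)]exchange_big /= add0n addn0 mul2n -addnn -sum_AB.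
by congr (_ + _); apply: eq_big_seq => u uA; apply: eq_big_seq => w wB;
  [exact: pair_AB | exact: pair_BA].
Qed.

Lemma key_dist_sum_cons c cs :
  key_dist_sum (Node (c :: cs)) =
  ptsize (Node cs) * (depth_sum c + ptsize c) + ptsize c * depth_sum (Node cs).
Proof.
apply/eqP; rewrite -(eqn_pmul2l (isT : 0 < 2)) key_dist_sum_sym verts_cons.
set A := map (cons 0) _; set B := map shift_child _.
have perm_V : perm_eq ([::] :: A ++ B) (A ++ [::] :: B) by rewrite -cat1s perm_catCA.
rewrite (perm_big _ perm_V); under eq_bigr do rewrite (perm_big _ perm_V).
rewrite sum_key_pair_dist.
- by rewrite depth_sum_key_subtree depth_sum_shift /A /B /= !size_map /ptsize verts_Node.
- by apply/allP => _ /mapP[x _ ->].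
by rewrite /=; apply/allP => _ /mapP[[|i x] _ ->].
Qed.

Lemma key_dist_sum_leaf : key_dist_sum (Node [::]) = 0.
Proof. by rewrite /key_dist_sum big_ord1 big_pred0 // => -[[|j] ?]. Qed.

Fixpoint ptree_encode (t : ptree) : GenTree.tree unit :=
  let: Node cs := t in GenTree.Node 0 (map ptree_encode cs).

Fixpoint ptree_decode (g : GenTree.tree unit) : ptree :=
  if g is GenTree.Node _ gs then Node (map ptree_decode gs) else Node [::].

Fixpoint ptree_encodeK (t : ptree) : ptree_decode (ptree_encode t) = t :=
  let: Node cs := t in
  f_equal Node ((fix encodeK_seq cs : map ptree_decode (map ptree_encode cs) = cs :=
    if cs is c :: cs' then f_equal2 cons (ptree_encodeK c) (encodeK_seq cs') else erefl) cs).

HB.instance Definition _ := Equality.copy ptree (can_type ptree_encodeK).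

Lemma Node_inj : injective Node.
Proof. by move=> x y []. Qed.

(* A duplicate-free list of child sequences containing every [f] with
   [ptsize (Node f) <= k] (and possibly larger ones). *)
Fixpoint forests (k : nat) : seq (seq ptree) :=
  if k is k'.+1 then [::] :: [seq Node f :: g | f <- forests k', g <- forests k'] else [::].

Lemma forests_uniq k : uniq (forests k).
Proof.
elim: k => //= k IH; rewrite allpairs_uniq // ?andbT => [|[f g] [f' g'] _ _ /= [-> ->] //].
by apply/allpairsP => -[[f g] []].
Qed.

Lemma mem_forests k f : ptsize (Node f) <= k -> f \in forests k.
Proof.
elim: k f => [|k IH] [|[f] g] //= size_le; rewrite in_cons.
apply/orP; right; apply: (allpairs_f (fun f g => Node f :: g)); apply: IH;
  move: size_le; rewrite ptsize_cons; have := ptsize_gt0 (Node f);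
  have := ptsize_gt0 (Node g); lia.
Qed.

Definition trees_of_size (m : nat) : seq ptree :=
  [seq t <- map Node (forests m) | ptsize t == m].

Lemma uniq_map_Node_forests k : uniq (map Node (forests k)).
Proof. by rewrite map_inj_uniq ?forests_uniq //; exact: Node_inj. Qed.

Lemma mem_map_Node_forests k t : ptsize t <= k -> t \in map Node (forests k).
Proof. by case: t => f size_le; rewrite mem_map ?mem_forests //; exact: Node_inj. Qed.

Lemma trees_of_size_uniq m : uniq (trees_of_size m).
Proof. by rewrite filter_uniq ?uniq_map_Node_forests. Qed.

Lemma mem_trees_of_size m t : (t \in trees_of_size m) = (ptsize t == m).
Proof.
by rewrite mem_filter andb_idr // => /eqP size_t; rewrite mem_map_Node_forests ?size_t.
Qed.

Lemma perm_trees_of_size (s : seq ptree) m :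
  uniq s -> (forall t, (t \in s) = (ptsize t == m)) -> perm_eq s (trees_of_size m).
Proof.
move=> s_uniq mem_s; apply: uniq_perm => // [|t]; first exact: trees_of_size_uniq.
by rewrite mem_s mem_trees_of_size.
Qed.

Lemma sum_trees_of_size_forests k m (F : ptree -> nat) : m <= k ->
  \sum_(t <- trees_of_size m) F t =
  \sum_(f <- forests k) (if ptsize (Node f) == m then F (Node f) else 0).
Proof.
move=> le_mk; rewrite -big_mkcond -(big_map Node (fun t => ptsize t == m)) -[RHS]big_filter.
symmetry; apply: perm_big; apply: perm_trees_of_size => [|t].
  by rewrite filter_uniq ?uniq_map_Node_forests.
by rewrite mem_filter andb_idr // => /eqP size_t; rewrite mem_map_Node_forests ?size_t.
Qed.

Lemma sum_eq_split (n s1 s2 x : nat) : 0 < s2 ->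
  (if s1 + s2 == n then x else 0) =
  \sum_(a < n) (if s1 == a then if s2 == n - a then x else 0 else 0).
Proof.
move=> s2_gt0; have [lt_s1n|le_ns1] := ltnP s1 n; last first.
  rewrite big1 => [|a _]; last by case: eqP => // s1a; have := ltn_ord a; lia.
  by case: eqP => //; lia.
rewrite -big_mkcond (big_pred1 (Ordinal lt_s1n)) => [|a] /=; last by rewrite eq_sym.
by have -> : (s2 == n - s1) = (s1 + s2 == n) by apply/eqP/eqP; lia.
Qed.

Lemma sum_trees_of_size_split n (H : ptree -> ptree -> nat) :
  \sum_(t <- trees_of_size n) (if t is Node (c :: cs) then H c (Node cs) else 0) =
  \sum_(a < n) \sum_(c <- trees_of_size a) \sum_(t <- trees_of_size (n - a)) H c t.
Proof.
case: n => [|k]; first by rewrite big_ord0 /trees_of_size big_nil.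
rewrite /trees_of_size big_filter big_map big_mkcond /= big_cons if_same add0n.
rewrite big_allpairs_dep /=.
under eq_bigr do under eq_bigr do rewrite ptsize_cons sum_eq_split ?ptsize_gt0 //.
under eq_bigr do rewrite exchange_big /=.
rewrite exchange_big /=; apply: eq_bigr => a _.
rewrite (sum_trees_of_size_forests _ (leq_ord a)).
apply: eq_bigr => f _; case: eqP => [size_f|_]; last by rewrite big1_eq.
rewrite -/(trees_of_size _) (sum_trees_of_size_forests (k := k)) //.
by move: (ptsize_gt0 (Node f)); rewrite size_f; lia.
Qed.

Definition num_trees (m : nat) : nat := size (trees_of_size m).
Definition total_depth (m : nat) : nat := \sum_(t <- trees_of_size m) depth_sum t.
Definition total_key_dist (m : nat) : nat := \sum_(t <- trees_of_size m) key_dist_sum t.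

Lemma sum_trees_of_size_ptsize m (F : nat -> ptree -> nat) :
  \sum_(t <- trees_of_size m) F (ptsize t) t = \sum_(t <- trees_of_size m) F m t.
Proof. by apply: eq_big_seq => t; rewrite mem_trees_of_size => /eqP ->. Qed.

Lemma sum_trees_of_size_rec n (F : ptree -> nat) (H : ptree -> ptree -> nat) :
  (forall c cs, F (Node (c :: cs)) = H c (Node cs)) ->
  \sum_(t <- trees_of_size n) F t =
  (n == 1) * F (Node [::]) +
  \sum_(a < n) \sum_(c <- trees_of_size a) \sum_(t <- trees_of_size (n - a)) H c t.
Proof.
move=> F_cons; rewrite -sum_trees_of_size_split.
have F_split t : F t = (if t == Node [::] then F t else 0) +
    (if t is Node (c :: cs) then H c (Node cs) else 0).
  by case: t => [[|c cs]]; rewrite ?eqxx ?addn0 //; case: eqP => // -[].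
rewrite (eq_bigr _ (fun t _ => F_split t)) big_split /= -big_mkcond.
rewrite (eq_bigr (fun=> F (Node [::]))) => [|t /eqP -> //].
rewrite big_const_seq iter_addn_0 mulnC.
by rewrite count_uniq_mem ?trees_of_size_uniq // mem_trees_of_size eq_sym.
Qed.

Lemma num_trees_rec n :
  num_trees n = (n == 1) + \sum_(a < n) num_trees a * num_trees (n - a).
Proof.
rewrite /num_trees -sum1_size (sum_trees_of_size_rec _ (H := fun _ _ => 1)) // muln1.
by congr (_ + _); apply: eq_bigr => a _; rewrite sum_nat_const_seq sum1_size.
Qed.

Lemma total_depth_rec n :
  total_depth n = \sum_(a < n) (num_trees (n - a) * (total_depth a + a * num_trees a)
                                + num_trees a * total_depth (n - a)).
Proof.
rewrite /total_depth (sum_trees_of_size_rec _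
  (H := fun c t => depth_sum c + ptsize c + depth_sum t) depth_sum_cons).
rewrite depth_sum_leaf muln0 add0n.
apply: eq_bigr => a _.
rewrite (sum_trees_of_size_ptsize a (fun s c => \sum_(t <- _) (depth_sum c + s + depth_sum t))).
rewrite /num_trees; under eq_bigr do rewrite big_split /= sum_nat_const_seq.
rewrite big_split /= sum_nat_const_seq -big_distrr /= big_split /= sum_nat_const_seq.
ring.
Qed.

Lemma total_key_dist_rec n :
  total_key_dist n = \sum_(a < n) ((n - a) * num_trees (n - a) * (total_depth a + a * num_trees a)
                                  + a * num_trees a * total_depth (n - a)).
Proof.
rewrite /total_key_dist (sum_trees_of_size_rec _ (H := fun c t =>
  ptsize t * (depth_sum c + ptsize c) + ptsize c * depth_sum t) key_dist_sum_cons).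
rewrite key_dist_sum_leaf.
rewrite muln0 add0n; apply: eq_bigr => a _.
rewrite (sum_trees_of_size_ptsize a
  (fun s c => \sum_(t <- _) (ptsize t * (depth_sum c + s) + s * depth_sum t))).
under eq_bigr do rewrite (sum_trees_of_size_ptsize (n - a)
  (fun s t => s * (depth_sum _ + a) + a * depth_sum t)).
rewrite /num_trees /total_depth.
under eq_bigr do rewrite big_split /= sum_nat_const_seq -big_distrr /=.
rewrite big_split /= sum_nat_const_seq -!big_distrr /= big_split /= sum_nat_const_seq.
ring.
Qed.

Import GRing.Theory Num.Theory.
Local Open Scope ring_scope.

Section Truncation.
Variable R : comNzRingType.
Implicit Types (p q C D T P : {poly R}).

Definition vanishes_below (K : nat) p := forall i, (i < K)%N -> p`_i = 0.

Lemma vanishes_belowW K K' p : (K' <= K)%N -> vanishes_below K p -> vanishes_below K' p.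
Proof. by move=> le_K'K p0 i lt_iK'; apply: p0; exact: leq_trans le_K'K. Qed.

Lemma vanishes_belowD {K p q} :
  vanishes_below K p -> vanishes_below K q -> vanishes_below K (p + q).
Proof. by move=> p0 q0 i lt_iK; rewrite coefD p0 ?q0 ?addr0. Qed.

Lemma vanishes_belowM {K} q {p} : vanishes_below K p -> vanishes_below K (q * p).
Proof.
move=> p0 i lt_iK; rewrite coefM big1 // => j _.
by rewrite p0 ?mulr0 //; exact: leq_ltn_trans (leq_subr _ _) lt_iK.
Qed.

Lemma vanishes_below_deriv K p : vanishes_below K.+1 p -> vanishes_below K p^`().
Proof. by move=> p0 i lt_iK; rewrite coef_deriv p0 ?mul0rn. Qed.

(* Each conclusion is an explicit polynomial combination of the hypotheses and of the first
   two derivatives of [C - X - C^2] (found by eliminating [D] and using [C'(1 - 2C) = 1]),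
   so it inherits the vanishing of the low-order coefficients. *)
Lemma catalan_ode K C :
  vanishes_below K.+1 (C - 'X - C * C) ->
  vanishes_below K (C^`() + C *+ 2 - 1 - 'X * C^`() *+ 4).
Proof.
set F := C - 'X - C * C => F0.
have dF : F^`() = C^`() * (1 - C *+ 2) - 1 by rewrite !derivB derivX derivM; ring.
rewrite (_ : _ - _ = (1 - C *+ 2) * F^`() + C^`() *+ 4 * F); last by rewrite dF /F; ring.
exact: vanishes_belowD (vanishes_belowM _ (vanishes_below_deriv F0))
                       (vanishes_belowM _ (vanishes_belowW (leqnSn K) F0)).
Qed.

Lemma key_dist_ode K C D T P :
  vanishes_below K.+2 (C - 'X - C * C) ->
  vanishes_below K.+2 (D - (D * C + P * C + C * D)) ->
  vanishes_below K.+2 (T - (D * P + P * P + P * D)) ->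
  vanishes_below K.+2 (P - 'X * C^`()) ->
  vanishes_below K (T *+ 2 - 'X ^+ 2 * C^`()^`()).
Proof.
set F1 := C - 'X - C * C; set F2 := D - _; set F3 := T - _; set F4 := P - _.
move=> F10 F20 F30 F40.
have dF1 : F1^`() = C^`() * (1 - C *+ 2) - 1 by rewrite !derivB derivX derivM; ring.
have ddF1 : F1^`()^`() = C^`()^`() * (1 - C *+ 2) - C^`() * C^`() *+ 2.
  by rewrite dF1 derivB derivM derivB derivMn -polyC1 derivC; ring.
rewrite (_ : _ - _ = 2%:R * F3 + (P * C^`() *+ 4 * F2 +
    (- (P * D *+ 4 + P * P *+ 2 - 'X ^+ 2 * C^`()^`()) * F1^`() +
    (C^`() * (P + 'X * C^`()) *+ 2 * F4 - 'X ^+ 2 * C^`() * F1^`()^`()))));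
  last by rewrite ddF1 dF1 /F1 /F2 /F3 /F4; ring.
have dF10 := vanishes_below_deriv F10; have ddF10 := vanishes_below_deriv dF10.
have le_K2 : (K <= K.+2)%N by rewrite leqW.
apply: vanishes_belowD (vanishes_belowM _ (vanishes_belowW le_K2 F30)) _.
apply: vanishes_belowD (vanishes_belowM _ (vanishes_belowW le_K2 F20)) _.
apply: vanishes_belowD (vanishes_belowM _ (vanishes_belowW (leqnSn K) dF10)) _.
rewrite -mulNr.
exact: vanishes_belowD (vanishes_belowM _ (vanishes_belowW le_K2 F40)) (vanishes_belowM _ ddF10).
Qed.
End Truncation.

Definition gf (N : nat) (f : nat -> nat) : {poly int} := \poly_(i < N) (f i)%:R.

Lemma coef_gf N f i : (gf N f)`_i = if (i < N)%N then (f i)%:R else 0.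
Proof. by rewrite coef_poly. Qed.

Lemma coef_gfM N f g n : (n < N)%N -> g 0%N = 0%N ->
  (gf N f * gf N g)`_n = (\sum_(a < n) f a * g (n - a))%:R.
Proof.
move=> lt_nN g0; rewrite coefM big_ord_recr /= subnn [X in _ * X]coef_gf.
rewrite (leq_ltn_trans (leq0n n) lt_nN) g0 mulr0 addr0 natr_sum; apply: eq_bigr => a _.
by rewrite !coef_gf natrM !(leq_ltn_trans _ lt_nN) // ?leq_subr // ltnW.
Qed.

Lemma total_depth0 : total_depth 0 = 0%N.
Proof. by rewrite /total_depth big_nil. Qed.

Section Series.
Variable N : nat.
Let C := gf N num_trees.
Let D := gf N total_depth.
Let T := gf N total_key_dist.
Let P := gf N (fun m => m * num_trees m)%N.

Lemma trees_gf_eqn : vanishes_below N (C - 'X - C * C).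
Proof.
move=> i lt_iN; rewrite !coefB coefX coef_gfM // coef_gf lt_iN num_trees_rec natrD.
by apply/eqP; rewrite addrAC addrK subr_eq0.
Qed.

Lemma depth_gf_eqn : vanishes_below N (D - (D * C + P * C + C * D)).
Proof.
move=> i lt_iN; rewrite coefB !coefD !coef_gfM ?total_depth0 // coef_gf lt_iN total_depth_rec.
by rewrite -!natrD -!big_split /=; apply/eqP; rewrite subr_eq0 eqr_nat; apply/eqP;
  apply: eq_bigr => a _; ring.
Qed.

Lemma key_dist_gf_eqn : vanishes_below N (T - (D * P + P * P + P * D)).
Proof.
move=> i lt_iN; rewrite coefB !coefD !coef_gfM ?total_depth0 // coef_gf lt_iN total_key_dist_rec.
by rewrite -!natrD -!big_split /=; apply/eqP; rewrite subr_eq0 eqr_nat; apply/eqP;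
  apply: eq_bigr => a _; ring.
Qed.

Lemma pointed_trees_gf_eqn : vanishes_below N (P - 'X * C^`()).
Proof.
move=> [|i] lt_iN; rewrite coefB coefXM coef_gf lt_iN ?subrr //=.
by rewrite coef_deriv coef_gf lt_iN -mulrnA mulnC subrr.
Qed.

End Series.

Lemma total_key_dist_closed m :
  (2 * total_key_dist m.+2 = m.+2 * m.+1 * num_trees m.+2)%N.
Proof.
have := key_dist_ode (K := m.+3) (@trees_gf_eqn _) (@depth_gf_eqn _) (@key_dist_gf_eqn _)
  (@pointed_trees_gf_eqn _) (ltnSn m.+2).
have lt_m : (m.+2 < m.+4.+1)%N by rewrite !ltnS leqW.
rewrite coefB coefMn coefXnM coef_gf lt_m subn2 /= !coef_deriv coef_gf lt_m -!mulrnA.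
by move/eqP; rewrite subr_eq0 eqr_nat => /eqP; nia.
Qed.

Lemma num_trees_rec_catalan j :
  (j.+2 * num_trees j.+2 + 2 * num_trees j.+1 = 4 * j.+1 * num_trees j.+1)%N.
Proof.
have := catalan_ode (K := j.+2) (@trees_gf_eqn _) (ltnSn j.+1).
rewrite !coefB coefD coefMn coef1 coefMn coefXM /= !coef_deriv !coef_gf ltnSn leqnSn -!mulrnA.
by move/eqP; rewrite subr0 subr_eq0 -natrD eqr_nat => /eqP; nia.
Qed.

Local Close Scope ring_scope.

Lemma central_binomS m : m.+1 * 'C((m.+1).*2, m.+1) = (4 * m + 2) * 'C(m.*2, m).
Proof.
have down := mul_bin_down (m.+1).*2 m.+1.
have /= diag := mul_bin_diag (m.*2).+1 m.
rewrite doubleS /= in down *; rewrite -!mul2n in down diag *.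
nia.
Qed.

Lemma num_trees_central_binom m : m.+1 * num_trees m.+1 = 'C(m.*2, m).
Proof.
elim: m => [|m IH]; first by rewrite num_trees_rec big_ord1.
apply/eqP; rewrite -(eqn_pmul2l (ltn0Sn m)) central_binomS -IH; apply/eqP.
have := num_trees_rec_catalan m; nia.
Qed.

Lemma num_trees_catalan m : num_trees m.+1 = catalan m.
Proof. by rewrite /catalan -num_trees_central_binom mulKn. Qed.

Lemma mem_In (s : seq ptree) t : t \in s <-> List.In t s.
Proof.
elim: s => [|u s IH] //=; rewrite in_cons; split.
- by case/orP => [/eqP ->|/IH]; [left | right].
- by case=> [->|/IH ->]; rewrite ?eqxx ?orbT.
Qed.

Lemma NoDup_uniq (s : seq ptree) : List.NoDup s -> uniq s.
Proof. by elim=> //= t s' t_notin _ ->; rewrite andbT; apply/negP => /mem_In. Qed.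

Theorem proposition3p2 (n : nat) (trees_n : seq ptree) :
  2 <= n ->
  List.NoDup trees_n ->
  (forall t : ptree, List.In t trees_n <-> ptsize t = n) ->
  \sum_(t <- trees_n) key_dist_sum t = 'C(n, 2) * catalan n.-1.
Proof.
case: n => [|[|m]] // _ /NoDup_uniq uniq_trees mem_trees.
have perm_trees : perm_eq trees_n (trees_of_size m.+2).
  apply: perm_trees_of_size => // t; apply/idP/eqP => [/mem_In/mem_trees|/mem_trees/mem_In] //.
rewrite (perm_big _ perm_trees) -/(total_key_dist _) /= -num_trees_catalan.
have := total_key_dist_closed m; have := mul_bin_diag m.+2 1; rewrite bin1; nia.
Qed.
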